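(* In the setting described in the context, assume A1$'$, A2 and A3. Suppose there exist a fixed subset $\mathcal K^*\subseteq\{1,\dots,K\}$ and a constant $\delta>0$ such that $\inf_{\mathbf w\in\mathcal W^*}\sum_{k\in\mathcal K^*}w_k\ge\frac12+\delta$ and $$\limsup_{n\to\infty}\Pr\Big(\bigcup_{k\in\mathcal K^*}\{Y\notin\mathcal C_k(\mathbf X;\mathcal D_n)\}\Big)\le\alpha.$$ Then $\liminf_{n\to\infty}\Pr\big(Y\in\mathcal C_{\mathrm{comb}}(\mathbf X;\mathcal D_n)\big)\ge1-\alpha$.
   Context: Setting: fix $K\ge2$ and $\alpha\in(0,1)$. For each sample size $n$, on a common probability space there are a random data set $\mathcal D_n$ and a random test pair $(\mathbf X,Y)$ with $\mathbf X\in\mathcal X\subseteq\mathbb R^p$, $Y\in\mathbb R$. For each $k\in\{1,\dots,K\}$ there is a random prediction set $\mathcal C_k(\mathbf X;\mathcal D_n)\subseteq\mathbb R$, determined by $\mathcal D_n$ and $\mathbf X$, such that the events $\{Y\in\mathcal C_k(\mathbf X;\mathcal D_n)\}$ are measurable. Let $\Delta^{K-1}=\{\mathbf w\in[0,1]^K:w_k\ge0,\sum_k w_k=1\}$ and let $\widehat{\mathbf w}_n=(\widehat w_{n,1},\dots,\widehat w_{n,K})$ be a $\sigma(\mathcal D_n)$-measurable random vector in $\Delta^{K-1}$. Let $\mathcal W^*\subseteq\Delta^{K-1}$ be a nonempty closed convex set; $\|\cdot\|$ is the Euclidean norm. A1$'$: $\sup_{k\in\{1,\dots,K\}}\big|\Pr(Y\notin\mathcal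 C_k(\mathbf X;\mathcal D_n)\mid\mathcal D_n)-\alpha\big|\to0$ in probability as $n\to\infty$. A2: $\inf_{\mathbf w\in\mathcal W^*}\|\widehat{\mathbf w}_n-\mathbf w\|\to0$ in probability as $n\to\infty$. A3: $\mathcal C_{\mathrm{comb}}(\mathbf X;\mathcal D_n):=\{y\in\mathbb R:\sum_{k=1}^K\widehat w_{n,k}\mathbf 1\{y\in\mathcal C_k(\mathbf X;\mathcal D_n)\}>1/2\}$. *)

From HB Require Import structures.
From mathcomp Require Import all_boot all_order all_algebra.
From mathcomp Require Import all_classical all_reals all_analysis.
Set Implicit Arguments. Unset Strict Implicit. Unset Printing Implicit Defensive.
Import Order.TTheory GRing.Theory Num.Theory.
Import numFieldNormedType.Exports.
Local Open Scope classical_set_scope.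
Local Open Scope ring_scope.

(* Euclidean norm on R^K (row vectors); note MathComp's default norm on
   matrices is the max norm, so we define the Euclidean one explicitly. *)
Definition eucl_norm (R : realType) (K : nat) (v : 'rV[R]_K) : R :=
  Num.sqrt (\sum_(k < K) v ord0 k ^+ 2).

Definition simplex (R : realType) (K : nat) : set 'rV[R]_K :=
  [set w | (forall k, 0 <= w ord0 k) /\ \sum_(k < K) w ord0 k = 1].

Definition convex_rV (R : realType) (K : nat) (W : set 'rV[R]_K) : Prop :=
  forall u v (t : R), W u -> W v -> 0 <= t -> t <= 1 ->
    W (t *: u + (1 - t) *: v).

Definition dist_set (R : realType) (K : nat) (W : set 'rV[R]_K) (v : 'rV[R]_K) : R :=
  inf [set eucl_norm (v - w) | w in W].

Definition cvg_prob0 (d : measure_display) (Omega : measurableType d)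
  (R : realType) (P : probability Omega R) (Z : nat -> Omega -> R) : Prop :=
  forall eps : R, 0 < eps ->
    (fun n => P [set w | eps <= `|Z n w|]) @ \oo --> 0%E.

(* g \o Dn is a version of the conditional probability P(E | sigma(Dn)):
   g is a measurable function of the data (hence g \o Dn is sigma(Dn)-measurable),
   g \o Dn is integrable, and for every sigma(Dn)-measurable set Dn^-1(B),
   int_{Dn^-1 B} g(Dn) dP = P(Dn^-1 B  inter  E). *)
Definition cond_prob_version (d : measure_display) (Omega : measurableType d)
  (R : realType) (P : probability Omega R)
  (dD : measure_display) (TD : measurableType dD) (Dn : Omega -> TD)
  (E : set Omega) (g : TD -> R) : Prop :=
  [/\ measurable_fun setT g,
      P.-integrable setT (fun w => (g (Dn w))%:E) &
      forall B : set TD, measurable B ->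
        (\int[P]_(w in Dn @^-1` B) (g (Dn w))%:E = P (Dn @^-1` B `&` E))%E].

Definition C_comb (R : realType) (K : nat) (w : 'rV[R]_K)
  (C : 'I_K -> set R) : set R :=
  [set y | 1 / 2 < \sum_(k < K) w ord0 k * \1_(C k) y].

From HB Require Import structures.
From mathcomp Require Import all_boot all_order all_algebra.
From mathcomp Require Import all_classical all_reals all_analysis.
From mathcomp Require Import lra measurable_realfun.
Import Order.TTheory GRing.Theory Num.Theory.
Import numFieldNormedType.Exports.
Local Open Scope classical_set_scope.
Local Open Scope ring_scope.

(* If every method of a coalition K* covers Y and the estimated weights lie
   within eps of W*, where eps |K*| < delta, then the K*-weights alone exceed
   1/2, so Y lies in the combined set. Hence the combined set can only miss Y
   on the union of the event that some k in K* misses Y, whose limsup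
   probability is at most alpha, and the event that the weights are at
   distance at least eps from W*, whose probability tends to 0 by A2. The one technical point is
   the measurability of the latter event, obtained by approximating the
   weights on finite grids of mesh 1/(m+1). *)

Section RealBounds.
Context {R : realType}.

Lemma sqrB_perturb_le (a b c r : R) :
  0 <= a <= 1 -> 0 <= b <= 1 -> 0 <= c <= 1 -> `|a - b| <= r ->
  (b - c) ^+ 2 <= (a - c) ^+ 2 + 2 * r.
Proof.
by move=> /andP[? ?] /andP[? ?] /andP[? ?] /ler_normlP[? ?]; nra.
Qed.

Lemma sum_sqrB_perturb_le {K : nat} (a b c : 'I_K -> R) (r : R) :
  (forall k, 0 <= a k <= 1) -> (forall k, 0 <= b k <= 1) ->
  (forall k, 0 <= c k <= 1) -> (forall k, `|a k - b k| <= r) ->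
  \sum_(k < K) (b k - c k) ^+ 2 <= \sum_(k < K) (a k - c k) ^+ 2 + (2 * r) *+ K.
Proof.
move=> a01 b01 c01 ab; rewrite -[K in _ *+ K]card_ord -sumr_const -big_split.
by apply: ler_sum => k _; exact: sqrB_perturb_le.
Qed.

Lemma ler_add_divSn (a b c : R) : 0 <= c ->
  (forall m : nat, a <= b + c / m.+1%:R) -> a <= b.
Proof.
move=> c0 h; apply/ler_addgt0Pr => e e0.
apply: (le_trans (h (Num.truncn (c / e)))); rewrite lerD2l ler_pdivrMr //.
by rewrite mulrC -ler_pdivrMr // ltW // truncnS_gt.
Qed.

Lemma grid_ge0_le1 {m : nat} (j : 'I_m.+2) : 0 <= ((j : nat)%:R / m.+1%:R : R) <= 1.
Proof.
by rewrite divr_ge0 //= ler_pdivrMr // mul1r ler_nat -ltnS ltn_ord.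
Qed.

Lemma grid_approx (x : R) (m : nat) : 0 <= x <= 1 ->
  exists j : 'I_m.+2, `|x - (j : nat)%:R / m.+1%:R| <= m.+1%:R^-1.
Proof.
move=> /andP[x0 x1]; have m0 : 0 < m.+1%:R :> R by [].
have /andP[tx xt] := Num.Theory.truncn_itv (mulr_ge0 x0 (ltW m0)).
set t := Num.truncn _ in tx xt.
have tm : (t < m.+2)%N.
  by rewrite ltnS -(ler_nat R) (le_trans tx) // ler_piMl.
exists (Ordinal tm) => /=.
have lo : t%:R / m.+1%:R <= x by rewrite ler_pdivrMr.
have hi : x - t%:R / m.+1%:R <= m.+1%:R^-1.
  by rewrite lerBlDl -[X in _ + X]mul1r -mulrDl ler_pdivlMr // natr1 ltW.
by rewrite ger0_norm ?subr_ge0.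
Qed.

End RealBounds.

Lemma simplex_coord_ge0_le1 {R : realType} {K : nat} (u : 'rV[R]_K) (k : 'I_K) :
  simplex u -> 0 <= u ord0 k <= 1.
Proof.
move=> [u0 u1]; rewrite u0 -u1 (bigD1 k) //= lerDl.
by apply: sumr_ge0 => i _; exact: u0.
Qed.

Section DistSet.
Context {R : realType} {K : nat} {W : set 'rV[R]_K}.
Hypothesis W0 : W !=set0.

Lemma eucl_norm_rowB (a : 'I_K -> R) (u : 'rV[R]_K) :
  eucl_norm (\row_k a k - u) = Num.sqrt (\sum_(k < K) (a k - u ord0 k) ^+ 2).
Proof. by congr Num.sqrt; apply: eq_bigr => k _; rewrite !mxE. Qed.

Let dists v := [set eucl_norm (v - w) | w in W].

Let dists_neq0 v : dists v !=set0.
Proof. by have [w Ww] := W0; exists (eucl_norm (v - w)), w. Qed.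

Let dists_lbound v : lbound (dists v) 0.
Proof. by move=> _ [w _ <-]; exact: sqrtr_ge0. Qed.

Lemma dist_set_ge0 v : 0 <= dist_set W v.
Proof. exact: lb_le_inf (dists_neq0 v) (dists_lbound v). Qed.

Lemma dist_set_row_geP (a : 'I_K -> R) (eps : R) : 0 < eps ->
  eps <= dist_set W (\row_k a k) <->
  (forall u, W u -> eps ^+ 2 <= \sum_(k < K) (a k - u ord0 k) ^+ 2).
Proof.
move=> eps0; split => [epsd u Wu | epsW].
  have : eps <= eucl_norm (\row_k a k - u).
    by apply: le_trans epsd (ge_inf _ _); [exists 0; exact: dists_lbound | exists u].
  rewrite eucl_norm_rowB => /(lerXn2r 2 (ltW eps0) (sqrtr_ge0 _)).
  by rewrite sqr_sqrtr // sumr_ge0 // => k _; exact: sqr_ge0.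
apply: lb_le_inf (dists_neq0 _) _ => _ [u Wu <-].
rewrite eucl_norm_rowB -(ger0_norm (ltW eps0)) -sqrtr_sqr.
exact/ler_wsqrtr/epsW.
Qed.

Lemma dist_set_row_lt (a : 'I_K -> R) (eps : R) :
  dist_set W (\row_k a k) < eps ->
  exists2 u, W u & forall k, `|a k - u ord0 k| < eps.
Proof.
move=> /(inf_lt (dists_neq0 _)) [_ [u Wu <-]] ueps; exists u => // k.
apply: le_lt_trans ueps; rewrite eucl_norm_rowB -sqrtr_sqr; apply: ler_wsqrtr.
by rewrite (bigD1 k) //= lerDl sumr_ge0 // => i _; exact: sqr_ge0.
Qed.

End DistSet.

Section MeasurableDistSetGe.
Context {R : realType} {K : nat} {d : measure_display} {Omega : measurableType d}.
Context {W : set 'rV[R]_K} {f : 'I_K -> Omega -> R} {eps : R}.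
Hypotheses (W0 : W !=set0) (Wsimplex : W `<=` simplex (R:=R) (K:=K)).
Hypotheses (mf : forall k, measurable_fun setT (f k))
  (f01 : forall k w, 0 <= f k w <= 1) (eps0 : 0 < eps).

Let mesh (m : nat) : R := m.+1%:R^-1.

Let grid {m} (j : {ffun 'I_K -> 'I_m.+2}) k : R := (j k : nat)%:R / m.+1%:R.

Let grid_far m (j : {ffun 'I_K -> 'I_m.+2}) := forall u, W u ->
  eps ^+ 2 - (2 * mesh m) *+ K <= \sum_(k < K) (grid j k - u ord0 k) ^+ 2.

Let grid_cell {m} (j : {ffun 'I_K -> 'I_m.+2}) :=
  \bigcap_(k in [set: 'I_K]) [set w | `|f k w - grid j k| <= mesh m].

Let W01 {u} k : W u -> 0 <= u ord0 k <= 1.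
Proof. by move=> /Wsimplex; exact: simplex_coord_ge0_le1. Qed.

(* Squared distances to W vary by at most 2 K mesh across a grid cell, so the
   points at distance at least eps are those lying in a far cell of every grid. *)
Lemma dist_set_ge_gridE : [set w | eps <= `|dist_set W (\row_k f k w)|] =
  \bigcap_(m in [set: nat]) \bigcup_(j in grid_far m) grid_cell j.
Proof.
apply/seteqP; split => w /=.
  rewrite ger0_norm ?dist_set_ge0 // => /(dist_set_row_geP W0 _ _ eps0) far m _.
  have /fin_all_exists[g gw] k := grid_approx (f k w) m (f01 k w).
  pose j := [ffun k => g k].
  have gridj k : grid j k = (g k : nat)%:R / m.+1%:R by rewrite /grid ffunE.
  exists j => [u Wu|k _ /=]; last by rewrite gridj.
  have cell_w k : `|grid j k - f k w| <= mesh m by rewrite gridj distrC.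
  have := sum_sqrB_perturb_le (grid j) (f^~ w) (fun k => u ord0 k) (mesh m)
    (fun k => grid_ge0_le1 (j k)) (f01^~ w) (fun k => W01 k Wu) cell_w.
  by have := far u Wu; move: (_ *+ K) => c; lra.
move=> cells; rewrite (le_trans _ (ler_norm _)) //; apply/dist_set_row_geP => // u Wu.
apply: (@ler_add_divSn _ _ _ (4 *+ K)) => [|m]; first exact: mulrn_wge0.
have [//|j far_j cell_j] := cells m.
have := sum_sqrB_perturb_le (f^~ w) (grid j) (fun k => u ord0 k) (mesh m) (f01^~ w)
  (fun k => grid_ge0_le1 (j k)) (fun k => W01 k Wu) (fun k => cell_j k I).
have := far_j u Wu.
have -> : 4 *+ K / m.+1%:R = (2 * mesh m) *+ K + (2 * mesh m) *+ K :> R.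
  by rewrite /mesh -mulrnDl -mulrDl -mulrnAl -natrD.
by move: (_ *+ K) => c; lra.
Qed.

Lemma measurable_dist_set_ge :
  measurable [set w | eps <= `|dist_set W (\row_k f k w)|].
Proof.
rewrite dist_set_ge_gridE; apply: bigcap_measurableType => m _.
apply: fin_bigcup_measurable; first exact: finite_finset.
move=> j _; apply: fin_bigcap_measurable; first exact: finite_finset.
move=> k _; rewrite -[X in measurable X]setTI.
have mfk : measurable_fun setT (fun w => `|f k w - grid j k|).
  by apply: measurableT_comp => //; exact: measurable_funB.
have -> : [set w | `|f k w - grid j k| <= mesh m] =
    (fun w => `|f k w - grid j k|) @^-1` `]-oo, mesh m].
  by apply/seteqP; split => x /=; rewrite in_itv.
exact: mfk.
Qed.

End MeasurableDistSetGe.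

Section EventuallyLimnEsupEinf.
Context {R : realType}.
Local Open Scope ereal_scope.
Implicit Types (u : (\bar R)^nat) (x : \bar R).

Lemma limn_esup_lt_near u x : limn_esup u < x -> \forall n \near \oo, u n <= x.
Proof.
rewrite limn_esup_lim (cvg_lim _ (@cvg_esups_inf _ u)) // => /ereal_inf_lt[_ [N _ <-]].
move=> /ltW supN; exists N => // n /= Nn; apply: le_trans supN.
by apply: ereal_sup_ubound; exists n.
Qed.

Lemma limn_einf_ge_near u x : (\forall n \near \oo, x <= u n) -> x <= limn_einf u.
Proof.
move=> [N _ xu]; rewrite limn_einf_lim; apply: lime_ge; first exact: is_cvg_einfs.
exists N => // n /= Nn; apply: le_ereal_inf_tmp => _ [m /= nm <-].
exact/xu/(leq_trans Nn).
Qed.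

End EventuallyLimnEsupEinf.

Lemma limn_einf_prob_ge {d : measure_display} {Omega : measurableType d}
    {R : realType} (P : probability Omega R) (A U S : nat -> set Omega) (a : R) :
  (forall n, measurable (A n)) -> (forall n, measurable (U n)) ->
  (forall n, measurable (S n)) -> (forall n, ~` A n `<=` U n `|` S n) ->
  (limn_esup (fun n => P (U n)) <= a%:E)%E ->
  (fun n => P (S n)) @ \oo --> 0%E ->
  ((1 - a)%:E <= limn_einf (fun n => P (A n)))%E.
Proof.
move=> mA mU mS AcUS supU S0; apply/lee_subgt0Pr => e e0.
have e2 : 0 < e / 2 by rewrite divr_gt0.
have U_near : \forall n \near \oo, (P (U n) <= (a + e / 2)%:E)%E.
  by apply: limn_esup_lt_near; rewrite (le_lt_trans supU) // lte_fin ltrDl.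
have S_near : \forall n \near \oo, (P (S n) <= (e / 2)%:E)%E.
  by apply: limn_esup_lt_near; rewrite (cvg_limn_einf_sup S0).2 lte_fin.
apply: limn_einf_ge_near; apply: filterS2 U_near S_near => n Un Sn.
have union_bound : (P (~` A n) <= P (U n) + P (S n))%E.
  apply: le_trans (measureU2 P (mU n) (mS n)).
  by apply: le_measure (AcUS n); rewrite inE; [exact: measurableC | exact: measurableU].
have := le_trans union_bound (leeD Un Sn).
rewrite probability_setC // -(fineK (fin_num_measure P _ (mA n))) //.
by move: (fine _) => z; rewrite -!EFinD !lee_fin; lra.
Qed.

Lemma C_comb_coalition {R : realType} {K : nat} {w u : 'rV[R]_K}
    {Cs : 'I_K -> set R} {A : {set 'I_K}} {eps delta y : R} :
  (forall k, 0 <= w ord0 k) -> (forall k, `|w ord0 k - u ord0 k| <= eps) ->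
  1 / 2 + delta <= \sum_(k in A) u ord0 k -> eps *+ #|A| < delta ->
  (forall k, k \in A -> Cs k y) -> C_comb w Cs y.
Proof.
move=> w0 wu Au epsA Acov.
have wA : \sum_(k in A) u ord0 k - eps *+ #|A| <= \sum_(k in A) w ord0 k.
  rewrite -sumr_const -sumrB; apply: ler_sum => k _.
  by have /ler_normlP[] := wu k; lra.
apply: (@lt_le_trans _ _ (\sum_(k in A) w ord0 k)); first lra.
rewrite [leRHS](bigID (mem A)) /= -[leLHS]addr0; apply: lerD.
  by apply: ler_sum => k kA; rewrite indicE mem_set ?mulr1 //; exact: Acov.
by apply: sumr_ge0 => k _; rewrite mulr_ge0 // indicE.
Qed.

Lemma C_comb_of_dist_set_lt {R : realType} {K : nat} {W : set 'rV[R]_K}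
    {A : {set 'I_K}} {delta eps : R} {a : 'I_K -> R} {Cs : 'I_K -> set R} {y : R} :
  W !=set0 -> (forall u, W u -> 1 / 2 + delta <= \sum_(k in A) u ord0 k) ->
  eps *+ #|A| < delta -> (forall k, 0 <= a k) ->
  dist_set W (\row_k a k) < eps -> (forall k, k \in A -> Cs k y) ->
  C_comb (\row_k a k) Cs y.
Proof.
move=> W0 WA epsA a0 /(dist_set_row_lt W0)[u Wu au] Acov.
apply: (C_comb_coalition _ _ (WA u Wu) epsA Acov) => k; rewrite mxE //.
exact: ltW.
Qed.

Lemma measurable_C_comb {d : measure_display} {Omega : measurableType d}
    {R : realType} {K : nat} {f : 'I_K -> Omega -> R}
    (Cs : 'I_K -> Omega -> set R) (y : Omega -> R) :
  (forall k, measurable_fun setT (f k)) ->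
  (forall k, measurable [set w | Cs k w (y w)]) ->
  measurable [set w | C_comb (\row_k f k w) (Cs^~ w) (y w)].
Proof.
move=> mf mCs; pose g w := \sum_(k < K) f k w * \1_[set w | Cs k w (y w)] w.
have mg : measurable_fun setT g.
  by apply: measurable_sum => k; apply: measurable_funM => //; exact: measurable_indic.
have -> : [set w | C_comb (\row_k f k w) (Cs^~ w) (y w)] = g @^-1` `]1 / 2, +oo[.
  apply/seteqP; split => w; rewrite /C_comb /= in_itv /= andbT;
    by under eq_bigr do rewrite mxE !indicE.
by rewrite -[X in measurable X]setTI; apply: mg => //; exact: measurable_itv.
Qed.

Theorem theorem3
  (R : realType) (K p : nat) (hK : (2 <= K)%N) (alpha : R)
  (halpha : 0 < alpha < 1)
  (d : measure_display) (Omega : measurableType d) (P : probability Omega R)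
  (dD : measure_display) (TD : nat -> measurableType dD)
  (Dn : forall n, Omega -> TD n)
  (mDn : forall n, measurable_fun setT (Dn n))
  (Xsp : set 'rV[R]_p)
  (X : Omega -> 'rV[R]_p) (hX : forall w, Xsp (X w))
  (Y : Omega -> R)
  (C : forall n, 'I_K -> TD n -> 'rV[R]_p -> set R)
  (mC : forall n k, measurable [set w | C n k (Dn n w) (X w) (Y w)])
  (what : forall n, 'I_K -> TD n -> R)
  (mwhat : forall n k, measurable_fun setT (what n k))
  (hwhat : forall n t, simplex (\row_k what n k t))
  (Wstar : set 'rV[R]_K)
  (hW0 : Wstar !=set0) (hWsub : Wstar `<=` simplex (R:=R) (K:=K))
  (hWcl : closed Wstar) (hWcv : convex_rV Wstar)
  (* A1' *)
  (hA1 : exists pr : forall n, 'I_K -> TD n -> R,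
     (forall n k, cond_prob_version P (Dn n)
        [set w | ~ C n k (Dn n w) (X w) (Y w)] (pr n k)) /\
     cvg_prob0 P (fun n w =>
        \big[Num.max/0]_(k < K) `|pr n k (Dn n w) - alpha|))
  (* A2 *)
  (hA2 : cvg_prob0 P (fun n w => dist_set Wstar (\row_k what n k (Dn n w))))
  (Kstar : {set 'I_K}) (delta : R) (hdelta : 0 < delta)
  (hKstar : forall v, Wstar v -> 1 / 2 + delta <= \sum_(k in Kstar) v ord0 k)
  (hlimsup : (limn_esup (fun n =>
      P [set w | exists2 k, k \in Kstar & ~ C n k (Dn n w) (X w) (Y w)])
      <= alpha%:E)%E) :
  ((1 - alpha)%:E <= limn_einf (fun n =>
      P [set w | C_comb (\row_k what n k (Dn n w)) (fun k => C n k (Dn n w) (X w)) (Y w)]))%E.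
Proof.
pose eps := delta / #|Kstar|.+1%:R.
have eps0 : 0 < eps by rewrite divr_gt0.
have epsK : eps *+ #|Kstar| < delta.
  by rewrite -mulr_natr /eps mulrAC ltr_pdivrMr // ltr_pM2l // ltr_nat.
have mwhatD n k : measurable_fun setT (fun w => what n k (Dn n w)).
  exact: measurableT_comp (mwhat n k) (mDn n).
have what01 n k w : 0 <= what n k (Dn n w) <= 1.
  by have := simplex_coord_ge0_le1 _ k (hwhat n (Dn n w)); rewrite mxE.
pose miss n := [set w | exists2 k, k \in Kstar & ~ C n k (Dn n w) (X w) (Y w)].
have mmiss n : measurable (miss n).
  have -> : miss n = \bigcup_(k in [set k | k \in Kstar]) ~` [set w | C n k (Dn n w) (X w) (Y w)].
    by apply/seteqP; split => w /= [k kK nC]; exists k.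
  by apply: fin_bigcup_measurable => [|k _]; [exact: finite_finset | exact/measurableC/mC].
apply: (limn_einf_prob_ge _ _ miss _ _ _ mmiss _ _ hlimsup (hA2 _ eps0)) => n.
- exact: (measurable_C_comb (fun k w => C n k (Dn n w) (X w)) Y (mwhatD n) (mC n)).
- exact: (measurable_dist_set_ge hW0 hWsub (mwhatD n) (what01 n) eps0).
move=> w notcomb; apply: contrapT => /not_orP[notmiss notfar]; apply: notcomb.
apply: (C_comb_of_dist_set_lt hW0 hKstar epsK) => [k | | k kK].
- by have /andP[] := what01 n k w.
- by rewrite ltNge -[X in eps <= X]ger0_norm ?dist_set_ge0 //; exact/negP.
- by apply: contrapT => nC; apply: notmiss; exists k.
Qed.
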